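(* Let $m\ge 2$ and let $T$ be any hierarchy of size $m$. Let $H^{(m)}(x)=\sum_{n\ge1}H^{(m)}_nx^n$, where $H^{(m)}_n$ is the number of isomorphism classes of hierarchies of size $n$ that do not contain a subhierarchy isomorphic to $T$, and let $\rho_m$ be the radius of convergence of $H^{(m)}(x)$. Then the limit of $H^{(m)}(x)$ as $x\to\rho_m$ from the left exists (and is finite) and equals $\sum_{n=1}^{\infty}H^{(m)}_n\rho_m^n$.
   Context: A hierarchy is a finite rooted unordered tree in which no vertex has exactly one child; its size is its number of leaves. For a vertex $v$ of a hierarchy, the subhierarchy at $v$ is the hierarchy induced by $v$ and all its descendants (with root $v$); a hierarchy contains $T$ as a subhierarchy if the subhierarchy at some vertex (possibly the root) is isomorphic to $T$ as a rooted tree. *)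

From Stdlib Require Import Reals List Permutation.
From Coquelicot Require Import Coquelicot.

(* Plane (ordered) rooted trees; a rooted unordered tree is such a tree
   considered up to [tiso] (permutation of children at every vertex). *)
Inductive tree : Type := Node : list tree -> tree.

Inductive tiso : tree -> tree -> Prop :=
| tiso_node : forall (l1 l2 l2' : list tree),
    Permutation l2 l2' -> Forall2 tiso l1 l2' -> tiso (Node l1) (Node l2).

Fixpoint leaves (t : tree) : nat :=
  match t with
  | Node nil => 1%nat
  | Node l => (fix go (l : list tree) : nat :=
                 match l with nil => 0%nat | c :: r => (leaves c + go r)%nat end) l
  end.

Fixpoint is_hierarchy (t : tree) : Prop :=
  match t with
  | Node l => length l <> 1%nat /\
      (fix go (l : list tree) : Prop :=
         match l with nil => True | c :: r => is_hierarchy c /\ go r end) l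
  end.

Fixpoint subtree (s t : tree) : Prop :=
  s = t \/
  match t with
  | Node l => (fix go (l : list tree) : Prop :=
                 match l with nil => False | c :: r => subtree s c \/ go r end) l
  end.

Definition contains (T t : tree) : Prop := exists s, subtree s t /\ tiso s T.

(* [num_classes P n k]: among the trees t with P t and n leaves, there are
   exactly k isomorphism classes (witnessed by a list of k pairwise
   non-isomorphic representatives meeting every class). *)
Definition num_classes (P : tree -> Prop) (n k : nat) : Prop :=
  exists s : list tree,
    length s = k /\
    (forall t, In t s -> P t /\ leaves t = n) /\
    ForallOrdPairs (fun a b => ~ tiso a b) s /\
    (forall t, P t -> leaves t = n -> exists u, In u s /\ tiso t u).

Definition avoids (T t : tree) : Prop := is_hierarchy t /\ ~ contains T t.

(* Grafting two T-avoiding hierarchies with k and n - k leaves under a new root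
   gives a T-avoiding hierarchy with n leaves as soon as n <> m, and each
   isomorphism class arises from at most two ordered pairs of classes. Hence
   sum_k H_k H_(n-k) <= 2 H_n for n <> m, so h = H(x) satisfies
   h^2 <= 2 h + C for 0 <= x < rho, which bounds h below the radius. The
   partial sums at rho inherit the bound by continuity, so the series
   converges at rho and Abel's theorem gives the limit. The radius is
   positive because hierarchies with n leaves are encoded by Dyck words of
   length at most 4n, and at most 1 because the star with n leaves avoids T
   for n >= 2, n <> m. *)

From Stdlib Require Import Reals List Permutation.
From Coquelicot Require Import Coquelicot.
From Stdlib Require Import Arith Lia Lra Classical ClassicalEpsilon.
(* Re-import [List] so that [Forall] is [List.Forall], not Coquelicot's. *)
Import List.

Lemma half_sublist_pairwise_unrelated {X : Type} (E : X -> X -> Prop) (l : list X) :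
  NoDup l ->
  (forall x y z, In x l -> In y l -> In z l -> E x y -> E x z -> x = y \/ x = z \/ y = z) ->
  exists l', incl l' l /\ ForallOrdPairs (fun x y => ~ E x y) l' /\
    (length l <= 2 * length l')%nat.
Proof.
  remember (length l) as N eqn:HN; revert l HN.
  induction N as [N IH] using lt_wf_ind; intros l -> Hnd Hfew.
  destruct l as [|x r].
  { exists nil; split; [apply incl_refl|split; [constructor|simpl; lia]]. }
  inversion Hnd as [|? ? Hx Hr]; subst.
  (* Keep [x] and drop its E-partner in [r], if any. *)
  assert (Hdrop : exists r', incl r' r /\ NoDup r' /\ (length r <= S (length r'))%nat /\
                    forall z, In z r' -> ~ E x z).
  { destruct (classic (exists y, In y r /\ E x y)) as [[y [Hy Exy]]|Hno].
    - destruct (in_split _ _ Hy) as [r1 [r2 ->]].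
      exists (r1 ++ r2); split; [|split; [|split]].
      + intros z Hz; apply in_app_or in Hz; apply in_or_app; simpl; tauto.
      + exact (NoDup_remove_1 _ _ _ Hr).
      + rewrite !length_app; simpl; lia.
      + intros z Hz Exz.
        assert (Hz' : In z (r1 ++ y :: r2))
          by (apply in_app_or in Hz; apply in_or_app; simpl; tauto).
        destruct (Hfew x y z (or_introl eq_refl) (or_intror Hy) (or_intror Hz') Exy Exz)
          as [<- | [<- | <-]].
        * exact (Hx (in_elt x r1 r2)).
        * exact (Hx Hz').
        * exact (NoDup_remove_2 _ _ _ Hr Hz).
    - exists r; repeat split; auto; [apply incl_refl|].
      intros z Hz Exz; apply Hno; now exists z. }
  destruct Hdrop as [r' [Hincl [Hnd' [Hlen Hnot]]]].
  pose proof (NoDup_incl_length Hnd' Hincl) as Hshorter.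
  destruct (IH (length r') ltac:(simpl; lia) r' eq_refl Hnd') as [l' [Hincl' [Hpair Hlen']]].
  { intros a b c Ha Hb Hc; apply Hfew; right; auto. }
  exists (x :: l'); split; [|split].
  - intros z [<-|Hz]; [apply in_eq|apply in_cons, Hincl, Hincl', Hz].
  - constructor; auto; apply Forall_forall; intros z Hz; apply Hnot, Hincl', Hz.
  - simpl; lia.
Qed.

Lemma NoDup_flat_map_tagged {A B : Type} (f : A -> list B) (tag : B -> A) l :
  NoDup l -> (forall a, In a l -> NoDup (f a)) ->
  (forall a b, In a l -> In b (f a) -> tag b = a) ->
  NoDup (flat_map f l).
Proof.
  induction l as [|a l IH]; intros Hl Hf Htag; simpl; [constructor|].
  inversion Hl as [|? ? Ha Hl']; subst; apply NoDup_app.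
  - apply Hf; left; reflexivity.
  - apply IH; auto; intros; [apply Hf | apply Htag]; auto; right; auto.
  - intros b Hb Hb'; apply in_flat_map in Hb'; destruct Hb' as [a' [Ha' Hb'']].
    apply Ha; rewrite <- (Htag a b (in_eq _ _) Hb), (Htag a' b (in_cons _ _ _ Ha') Hb'').
    exact Ha'.
Qed.

Lemma NoDup_list_prod {A B : Type} (l : list A) (l' : list B) :
  NoDup l -> NoDup l' -> NoDup (list_prod l l').
Proof.
  intros Hl Hl'; rewrite list_prod_as_flat_map.
  apply (NoDup_flat_map_tagged _ fst); auto.
  - intros a _; apply FinFun.Injective_map_NoDup; [intros b b' E; now injection E|exact Hl'].
  - intros a p _ Hp; apply in_map_iff in Hp; destruct Hp as [b [<- _]]; reflexivity.
Qed.

Lemma INR_length_flat_map_seq {B : Type} (f : nat -> list B) N :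
  INR (length (flat_map f (seq 0 (S N)))) = sum_f_R0 (fun k => INR (length (f k))) N.
Proof.
  induction N as [|N IH]; [simpl; now rewrite app_nil_r|].
  rewrite seq_S, flat_map_app, length_app, plus_INR, IH; simpl.
  now rewrite app_nil_r.
Qed.

Lemma ForallOrdPairs_map {A B : Type} (R : B -> B -> Prop) (f : A -> B) l :
  ForallOrdPairs (fun x y => R (f x) (f y)) l -> ForallOrdPairs R (map f l).
Proof.
  induction 1 as [|x l Hx _ IH]; simpl; constructor; [|exact IH].
  apply Forall_map, Hx.
Qed.

Section TreeInd.
Variable P : tree -> Prop.
Hypothesis P_Node : forall l, Forall P l -> P (Node l).

Fixpoint tree_ind_Forall (t : tree) : P t :=
  match t with
  | Node l => P_Node l ((fix go (l : list tree) : Forall P l :=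
      match l with
      | nil => Forall_nil _
      | c :: r => Forall_cons _ (tree_ind_Forall c) (go r)
      end) l)
  end.
End TreeInd.

Lemma tiso_refl t : tiso t t.
Proof.
  induction t as [l IH] using tree_ind_Forall.
  apply (tiso_node l l l (Permutation_refl l)).
  induction IH; constructor; auto.
Qed.

Lemma tiso_sym t u : tiso t u -> tiso u t.
Proof.
  revert u; induction t as [l1 IH] using tree_ind_Forall; intros u Htu.
  inversion Htu as [? l2 l2' Hperm Hl]; subst.
  assert (Hl' : Forall2 tiso l2' l1).
  { clear Htu Hperm; revert IH.
    induction Hl; intros IH; inversion IH; subst; constructor; auto. }
  destruct (Permutation_Forall2 (Permutation_sym Hperm) Hl') as [l1' [Hperm' Hl1']].
  exact (tiso_node l2 l1 l1' Hperm' Hl1').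
Qed.

Lemma tiso_trans t u v : tiso t u -> tiso u v -> tiso t v.
Proof.
  revert u v; induction t as [l1 IH] using tree_ind_Forall; intros u v Htu Huv.
  inversion Htu as [? l2 l2' Hperm12 Hl12]; subst.
  inversion Huv as [? l3 l3' Hperm23 Hl23]; subst.
  destruct (Permutation_Forall2 Hperm12 Hl23) as [l3'' [Hperm3 Hl23']].
  apply (tiso_node l1 l3 l3''); [now apply (Permutation_trans Hperm23)|].
  clear - IH Hl12 Hl23'; revert l3'' IH Hl23'.
  induction Hl12; intros l3'' IH Hl; inversion IH; inversion Hl; subst; eauto.
Qed.

Lemma leaves_Node l :
  leaves (Node l) = match l with nil => 1%nat | _ => list_sum (map leaves l) end.
Proof.
  destruct l as [|c r]; [reflexivity|].
  simpl; f_equal; induction r; simpl; auto.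
Qed.

Lemma leaves_tiso t u : tiso t u -> leaves t = leaves u.
Proof.
  revert u; induction t as [l1 IH] using tree_ind_Forall; intros u Htu.
  inversion Htu as [? l2 l2' Hperm Hl]; subst.
  assert (Hmap : map leaves l1 = map leaves l2').
  { clear Htu Hperm; revert IH.
    induction Hl; intros IH; inversion IH; subst; simpl; f_equal; auto. }
  rewrite !leaves_Node, (Permutation_list_sum (Permutation_map leaves Hperm)).
  rewrite Hmap.
  destruct l1, l2, l2'; simpl in *; auto; try discriminate;
    apply Permutation_length in Hperm; simpl in Hperm; lia.
Qed.

Lemma is_hierarchy_Node l :
  is_hierarchy (Node l) <-> length l <> 1%nat /\ Forall is_hierarchy l.
Proof.
  simpl; apply and_iff_compat_l.
  induction l as [|c r IH]; simpl; [split; auto|].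
  rewrite Forall_cons_iff, IH; reflexivity.
Qed.

Lemma subtree_Node s l :
  subtree s (Node l) -> s = Node l \/ exists c, In c l /\ subtree s c.
Proof.
  intros [Heq|Hin]; [now left|right].
  induction l as [|c r IH]; [contradiction|].
  destruct Hin as [Hc|Hr]; [now exists c; split; [left|]|].
  destruct (IH Hr) as [c' [Hc' Hsub]]; exists c'; split; [right|]; assumption.
Qed.

Fixpoint encode (t : tree) : list bool :=
  match t with Node l => true :: flat_map encode l ++ false :: nil end.

Lemma encode_app_inj t t' r r' :
  encode t ++ r = encode t' ++ r' -> t = t' /\ r = r'.
Proof.
  revert t' r r'; induction t as [l IH] using tree_ind_Forall.
  intros [l'] r r' E; simpl in E; injection E as E.
  rewrite <- !app_assoc in E; simpl in E.
  enough (Hl : forall l' r r', flat_map encode l ++ false :: r = flat_map encode l' ++ false :: r' ->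
            l = l' /\ r = r')
    by (destruct (Hl _ _ _ E) as [-> ->]; auto).
  clear E l' r r'.
  induction IH as [|[lc] cs Hc _ IHcs]; intros [|[lc'] cs'] r r' E; cbn [flat_map] in E;
    try discriminate; [now injection E as ->|].
  rewrite <- !app_assoc in E.
  destruct (Hc _ _ _ E) as [-> E']; destruct (IHcs _ _ _ E') as [-> ->]; auto.
Qed.

Lemma encode_inj t t' : encode t = encode t' -> t = t'.
Proof.
  intro E; apply (encode_app_inj t t' nil nil); rewrite !app_nil_r; exact E.
Qed.

Lemma encode_length_le t : is_hierarchy t -> (length (encode t) + 2 <= 4 * leaves t)%nat.
Proof.
  induction t as [l IH] using tree_ind_Forall.
  rewrite is_hierarchy_Node, leaves_Node; intros [Hlen Hh]; simpl.
  rewrite length_app; simpl.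
  assert (Hsum : (length (flat_map encode l) + 2 * length l <= 4 * list_sum (map leaves l))%nat).
  { clear Hlen; induction IH as [|c cs Hc _ IHcs]; simpl; [lia|].
    inversion Hh; subst; rewrite length_app; specialize (Hc H1); specialize (IHcs H2); lia. }
  destruct l as [|c [|c' cs]]; simpl in *; lia.
Qed.

Fixpoint bool_lists_upto (L : nat) : list (list bool) :=
  match L with
  | O => nil :: nil
  | S L => nil :: map (cons true) (bool_lists_upto L) ++ map (cons false) (bool_lists_upto L)
  end.

Lemma length_bool_lists_upto L : (length (bool_lists_upto L) < 2 ^ S L)%nat.
Proof.
  induction L as [|L IH]; simpl in *; [lia|].
  rewrite length_app, !length_map; lia.
Qed.

Lemma in_bool_lists_upto L w : (length w <= L)%nat -> In w (bool_lists_upto L).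
Proof.
  revert w; induction L as [|L IH]; intros [|b w] Hw; simpl in *; auto; try lia.
  right; apply in_or_app; destruct b; [left|right]; apply in_map, IH; lia.
Qed.

Lemma NoDup_pairwise_not_tiso s : ForallOrdPairs (fun a b => ~ tiso a b) s -> NoDup s.
Proof.
  induction 1 as [|a s Ha _ IH]; constructor; auto.
  intro Has; exact (proj1 (Forall_forall _ _) Ha a Has (tiso_refl a)).
Qed.

Lemma num_classes_le_pow (P : tree -> Prop) n k :
  (forall t, P t -> is_hierarchy t) -> num_classes P n k -> (k <= 2 * 16 ^ n)%nat.
Proof.
  intros HP [s [<- [Hs [Hpair _]]]].
  replace (2 * 16 ^ n)%nat with (2 ^ S (4 * n))%nat
    by (rewrite Nat.pow_succ_r', Nat.pow_mul_r; reflexivity).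
  apply Nat.lt_le_incl, (Nat.le_lt_trans _ (length (bool_lists_upto (4 * n))));
    [|apply length_bool_lists_upto].
  rewrite <- (length_map encode).
  apply NoDup_incl_length.
  - apply FinFun.Injective_map_NoDup; [exact encode_inj|].
    now apply NoDup_pairwise_not_tiso.
  - intros w Hw; apply in_map_iff in Hw; destruct Hw as [t [<- Ht]].
    destruct (Hs t Ht) as [Pt <-].
    apply in_bool_lists_upto; pose proof (encode_length_le t (HP t Pt)); lia.
Qed.

Lemma num_classes_length_le (P : tree -> Prop) n k u :
  num_classes P n k ->
  ForallOrdPairs (fun a b => ~ tiso a b) u ->
  (forall t, In t u -> P t /\ leaves t = n) ->
  (length u <= k)%nat.
Proof.
  intros [s [<- [_ [_ Hcover]]]] Hpair Hu.
  assert (Hrep : forall t, In t u -> exists v, In v s /\ tiso t v)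
    by (intros t Ht; destruct (Hu t Ht); now apply Hcover).
  clear Hu Hcover; revert s Hrep.
  induction Hpair as [|x u Hx _ IH]; intros s Hrep; simpl; [lia|].
  destruct (Hrep x (or_introl eq_refl)) as [v [Hv Hxv]].
  destruct (in_split _ _ Hv) as [s1 [s2 ->]].
  rewrite length_app; simpl.
  enough (length u <= length (s1 ++ s2))%nat by (rewrite length_app in *; lia).
  apply IH; intros t Ht.
  destruct (Hrep t (or_intror Ht)) as [w [Hw Htw]].
  exists w; split; [|exact Htw].
  apply in_app_or in Hw; apply in_or_app; destruct Hw as [Hw|[<-|Hw]]; auto.
  exfalso; apply (proj1 (Forall_forall _ _) Hx t Ht).
  exact (tiso_trans _ _ _ Hxv (tiso_sym _ _ Htw)).
Qed.

Definition star (n : nat) : tree := Node (repeat (Node nil) n).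

Lemma avoids_star T n :
  (2 <= leaves T)%nat -> (2 <= n)%nat -> n <> leaves T ->
  avoids T (star n) /\ leaves (star n) = n.
Proof.
  intros HT Hn HnT.
  assert (Hleaves : leaves (star n) = n).
  { unfold star; rewrite leaves_Node.
    destruct n as [|n]; [lia|].
    change (list_sum (map leaves (repeat (Node nil) (S n))) = S n).
    clear; induction (S n); simpl; auto. }
  split; [split|exact Hleaves].
  - apply is_hierarchy_Node; rewrite repeat_length; split; [lia|].
    apply Forall_forall; intros c Hc; apply repeat_spec in Hc; subst c; simpl; lia.
  - intros [s [Hs Hiso]]; apply leaves_tiso in Hiso.
    apply subtree_Node in Hs; destruct Hs as [->|[c [Hc Hsc]]].
    + fold (star n) in Hiso; lia.
    + apply repeat_spec in Hc; subst c; destruct Hsc as [->|[]]; simpl in Hiso; lia.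
Qed.

Lemma num_classes_avoids_pos T n k :
  (2 <= leaves T)%nat -> (2 <= n)%nat -> n <> leaves T ->
  num_classes (avoids T) n k -> (1 <= k)%nat.
Proof.
  intros HT Hn HnT Hk.
  apply (num_classes_length_le _ _ _ (star n :: nil) Hk).
  - repeat constructor.
  - intros t [<-|[]]; now apply avoids_star.
Qed.

Definition graft (p : tree * tree) : tree := Node (fst p :: snd p :: nil).

Lemma leaves_graft a b : leaves (graft (a, b)) = (leaves a + leaves b)%nat.
Proof. simpl; lia. Qed.

Lemma avoids_graft T a b :
  avoids T a -> avoids T b -> (leaves a + leaves b <> leaves T)%nat ->
  avoids T (graft (a, b)).
Proof.
  intros [Ha Na] [Hb Nb] Hn; split; [simpl; auto|].
  intros [s [Hs Hiso]]; apply subtree_Node in Hs.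
  destruct Hs as [->|[c [[<-|[<-|[]]] Hsc]]].
  - apply leaves_tiso in Hiso; simpl in Hiso; lia.
  - apply Na; now exists s.
  - apply Nb; now exists s.
Qed.

Lemma tiso_graft_inv a b c d :
  tiso (graft (a, b)) (graft (c, d)) ->
  (tiso a c /\ tiso b d) \/ (tiso a d /\ tiso b c).
Proof.
  intro Hiso; inversion Hiso as [? ? l Hperm Hl]; subst.
  apply Permutation_length_2_inv in Hperm.
  destruct Hperm as [->| ->]; inversion Hl as [|? ? ? ? H1 Hl']; subst;
    inversion Hl' as [|? ? ? ? H2 _]; subst; auto.
Qed.

Lemma num_classes_reps (P : tree -> Prop) (H : nat -> nat) :
  (forall n, num_classes P n (H n)) ->
  exists reps : nat -> list tree, forall n,
    length (reps n) = H n /\ (forall t, In t (reps n) -> P t /\ leaves t = n) /\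
    ForallOrdPairs (fun a b => ~ tiso a b) (reps n).
Proof.
  intro HP.
  exists (fun n => proj1_sig (constructive_indefinite_description _ (HP n))); intro n.
  destruct (proj2_sig (constructive_indefinite_description _ (HP n)))
    as [Hlen [Hin [Hpair _]]]; auto.
Qed.

Section GraftCount.

Variables (T : tree) (H : nat -> nat) (reps : nat -> list tree).
Hypothesis classes_H : forall n, num_classes (avoids T) n (H n).
Hypothesis length_reps : forall n, length (reps n) = H n.
Hypothesis in_reps : forall n t, In t (reps n) -> avoids T t /\ leaves t = n.
Hypothesis reps_pairwise : forall n, ForallOrdPairs (fun a b => ~ tiso a b) (reps n).

Lemma reps_tiso_eq j k a b : In a (reps j) -> In b (reps k) -> tiso a b -> a = b.
Proof.
  intros Ha Hb Hab.
  assert (j = k) as <-.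
  { rewrite <- (proj2 (in_reps j a Ha)), <- (proj2 (in_reps k b Hb)).
    exact (leaves_tiso a b Hab). }
  destruct (ForallOrdPairs_In (reps_pairwise j) a b Ha Hb) as [|[Hn|Hn]]; auto;
    contradict Hn; auto using tiso_sym.
Qed.

Definition rep_pairs (n : nat) : list (tree * tree) :=
  flat_map (fun k => list_prod (reps k) (reps (n - k))) (seq 0 (S n)).

Lemma in_rep_pairs n a b :
  In (a, b) (rep_pairs n) -> exists k, (k <= n)%nat /\ In a (reps k) /\ In b (reps (n - k)).
Proof.
  unfold rep_pairs; rewrite in_flat_map; intros [k [Hk Hab]].
  apply in_seq in Hk; apply in_prod_iff in Hab.
  exists k; split; [lia|exact Hab].
Qed.

Lemma INR_length_rep_pairs n :
  INR (length (rep_pairs n)) = sum_f_R0 (fun k => INR (H k) * INR (H (n - k))) n.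
Proof.
  unfold rep_pairs; rewrite INR_length_flat_map_seq.
  apply sum_eq; intros k _.
  now rewrite length_prod, mult_INR, !length_reps.
Qed.

Lemma NoDup_rep_pairs n : NoDup (rep_pairs n).
Proof.
  apply (NoDup_flat_map_tagged _ (fun p => leaves (fst p))); [apply seq_NoDup| |].
  - intros k _; apply NoDup_list_prod; apply NoDup_pairwise_not_tiso, reps_pairwise.
  - intros k [a b] _ Hab; apply in_prod_iff in Hab.
    exact (proj2 (in_reps k a (proj1 Hab))).
Qed.

Lemma graft_rep_pairs_avoids n p :
  n <> leaves T -> In p (rep_pairs n) -> avoids T (graft p) /\ leaves (graft p) = n.
Proof.
  destruct p as [a b]; intros HnT Hp.
  destruct (in_rep_pairs n a b Hp) as [k [Hk [Ha Hb]]].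
  destruct (in_reps k a Ha) as [Aa La], (in_reps (n - k) b Hb) as [Ab Lb].
  rewrite leaves_graft, La, Lb; split; [apply avoids_graft; auto|]; lia.
Qed.

Lemma graft_rep_pairs_tiso n p q :
  In p (rep_pairs n) -> In q (rep_pairs n) -> tiso (graft p) (graft q) ->
  q = p \/ q = (snd p, fst p).
Proof.
  destruct p as [a b], q as [c d]; intros Hp Hq Hiso.
  destruct (in_rep_pairs n a b Hp) as [k [_ [Ha Hb]]].
  destruct (in_rep_pairs n c d Hq) as [k' [_ [Hc Hd]]].
  destruct (tiso_graft_inv a b c d Hiso) as [[Hac Hbd]|[Had Hbc]]; simpl.
  - left; f_equal; symmetry; eapply reps_tiso_eq; eauto.
  - right; f_equal; symmetry; eapply reps_tiso_eq; eauto.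
Qed.

Lemma sum_conv_classes_le n :
  n <> leaves T -> sum_f_R0 (fun k => INR (H k) * INR (H (n - k))) n <= 2 * INR (H n).
Proof.
  intro HnT; rewrite <- INR_length_rep_pairs.
  destruct (half_sublist_pairwise_unrelated (fun p q => tiso (graft p) (graft q))
              (rep_pairs n) (NoDup_rep_pairs n)) as [l [Hincl [Hpair Hlen]]].
  { intros p q r Hp Hq Hr Hpq Hpr.
    destruct (graft_rep_pairs_tiso n p q Hp Hq Hpq) as [->| ->],
             (graft_rep_pairs_tiso n p r Hp Hr Hpr) as [->| ->]; auto. }
  assert (Hl : (length (map graft l) <= H n)%nat).
  { apply (num_classes_length_le _ n _ _ (classes_H n)).
    - exact (ForallOrdPairs_map _ graft l Hpair).
    - intros t Ht; apply in_map_iff in Ht; destruct Ht as [p [<- Hp]].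
      exact (graft_rep_pairs_avoids n p HnT (Hincl p Hp)). }
  rewrite length_map in Hl.
  apply le_INR in Hlen, Hl; rewrite mult_INR in Hlen; simpl in Hlen; lra.
Qed.

End GraftCount.

Lemma sum_f_R0_le_except (u v : nat -> R) (m N : nat) :
  (forall n, n <> m -> u n <= v n) -> (forall n, 0 <= v n) -> 0 <= u m ->
  sum_f_R0 u N <= sum_f_R0 v N + u m.
Proof.
  intros Huv Hv Hum.
  enough (sum_f_R0 u N <= sum_f_R0 v N + (if Nat.leb m N then u m else 0))
    by (destruct (Nat.leb m N); lra).
  induction N as [|N IH]; simpl.
  - destruct m as [|m]; simpl; [pose proof (Hv 0%nat); lra|].
    specialize (Huv 0%nat ltac:(lia)); lra.
  - destruct (Nat.eq_dec (S N) m) as [<-|Hne].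
    + rewrite Nat.leb_refl.
      replace (Nat.leb (S N) N) with false in IH by (symmetry; apply Nat.leb_gt; lia).
      pose proof (Hv (S N)); lra.
    + replace (Nat.leb m (S N)) with (Nat.leb m N)
        by (destruct (Nat.leb_spec m N), (Nat.leb_spec m (S N)); auto; lia).
      specialize (Huv (S N) Hne); lra.
Qed.

Lemma continuity_pt_le_from_left (f : R -> R) (x0 y C : R) :
  continuity_pt f x0 -> y < x0 -> (forall x, y <= x < x0 -> f x <= C) -> f x0 <= C.
Proof.
  intros Hf Hy Hle; apply Rnot_lt_le; intro HC.
  destruct (Hf (f x0 - C)) as [d [Hd Hclose]]; [lra|].
  pose proof (Rmax_r y (x0 - d / 2)) as Hmax.
  set (x := Rmax y (x0 - d / 2)) in Hmax.
  assert (Hx : y <= x < x0) by (split; [apply Rmax_l|apply Rmax_lub_lt; lra]).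
  assert (Hdist : R_dist (f x) (f x0) < f x0 - C).
  { apply Hclose; split; [split; [exact I|lra]|].
    change (Rabs (x - x0) < d); rewrite Rabs_left; lra. }
  apply Rabs_def2 in Hdist; pose proof (Hle x Hx); lra.
Qed.

Lemma CV_radius_ge_inv (a : nat -> R) (K r : R) :
  0 < r -> (forall n, Rabs (a n) <= K * r ^ n) -> Rbar_le (/ r) (CV_radius a).
Proof.
  intros Hr Ha; apply (proj1 (CV_radius_bounded a)); exists K; intro n.
  assert (Hinv : 0 < (/ r) ^ n) by (apply pow_lt, Rinv_0_lt_compat, Hr).
  rewrite Rabs_mult, (Rabs_pos_eq _ (Rlt_le _ _ Hinv)).
  replace K with (K * r ^ n * (/ r) ^ n)
    by (rewrite Rmult_assoc, <- Rpow_mult_distr, Rinv_r, pow1; lra).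
  apply Rmult_le_compat_r; [lra|apply Ha].
Qed.

Lemma CV_radius_le_1 (a : nat -> R) :
  (forall N, exists n, (N <= n)%nat /\ 1 <= Rabs (a n)) -> Rbar_le (CV_radius a) 1.
Proof.
  intro Hfreq; apply Rbar_not_lt_le; intro Hlt.
  assert (Hcv : is_lim_seq (fun n => a n * 1 ^ n) 0).
  { apply ex_series_lim_0, ex_pseries_R, CV_radius_inside; rewrite Rabs_R1; exact Hlt. }
  apply is_lim_seq_Reals in Hcv.
  destruct (Hcv (1 / 2) ltac:(lra)) as [N HN].
  destruct (Hfreq N) as [n [Hn Han]].
  specialize (HN n Hn); unfold R_dist in HN.
  rewrite pow1, Rmult_1_r, Rminus_0_r in HN; lra.
Qed.

Lemma pseries_partial_sums_cv (a : nat -> R) (x l : R) :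
  is_pseries a x l -> Un_cv (fun N => sum_f_R0 (fun n => a n * x ^ n) N) l.
Proof. intro Hl; apply is_series_Reals, is_pseries_R, Hl. Qed.

Lemma Un_cv_le_const (u : nat -> R) (l K : R) : Un_cv u l -> (forall n, u n <= K) -> l <= K.
Proof.
  intros Hu HK; apply is_lim_seq_Reals in Hu.
  exact (is_lim_seq_le u (fun _ => K) l K HK Hu (is_lim_seq_const K)).
Qed.

Section ConvolutionBoundedPowerSeries.

Variables (a : nat -> R) (m : nat) (rho : R).
Hypothesis a_ge0 : forall n, 0 <= a n.
Hypothesis radius_a : CV_radius a = Finite rho.
Hypothesis rho_gt0 : 0 < rho.
Hypothesis PS_mult_le : forall n, n <> m -> PS_mult a a n <= 2 * a n.

Lemma Rabs_lt_CV_radius x : 0 <= x < rho -> Rbar_lt (Rabs x) (CV_radius a).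
Proof. intro Hx; rewrite radius_a, Rabs_pos_eq; simpl; lra. Qed.

Lemma PSeries_sqr_le x :
  0 <= x < rho -> PSeries a x * PSeries a x <= 2 * PSeries a x + PS_mult a a m * x ^ m.
Proof.
  intro Hx; pose proof (Rabs_lt_CV_radius x Hx) as Hin.
  pose proof (PSeries_correct _ _ (CV_radius_inside _ _ Hin)) as Hh.
  apply (Un_cv_le_const _ _ _
           (pseries_partial_sums_cv _ _ _ (is_pseries_mult a a x _ _ Hh Hh Hin Hin))).
  intro N.
  assert (Hxn : forall n, 0 <= x ^ n) by (intro; apply pow_le; lra).
  assert (Hterm : forall n, 0 <= a n * x ^ n) by (intro; apply Rmult_le_pos; auto).
  eapply Rle_trans.
  - apply (sum_f_R0_le_except _ (fun n => a n * x ^ n * 2) m N).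
    + intros n Hn; specialize (PS_mult_le n Hn); specialize (Hxn n); nra.
    + intro n; specialize (Hterm n); lra.
    + apply Rmult_le_pos; [apply cond_pos_sum; intro; apply Rmult_le_pos|]; auto.
  - rewrite <- scal_sum.
    pose proof (sum_incr _ N _ (pseries_partial_sums_cv _ _ _ Hh) Hterm); lra.
Qed.

Lemma PSeries_le_inside x : 0 <= x < rho -> PSeries a x <= PS_mult a a m * rho ^ m + 2.
Proof.
  intro Hx; pose proof (PSeries_sqr_le x Hx) as Hsqr.
  assert (Hc : 0 <= PS_mult a a m) by (apply cond_pos_sum; intro; apply Rmult_le_pos; auto).
  assert (HC : PS_mult a a m * x ^ m <= PS_mult a a m * rho ^ m)
    by (apply Rmult_le_compat_l, pow_incr; lra).
  assert (0 <= PS_mult a a m * rho ^ m) by (apply Rmult_le_pos, pow_le; lra).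
  set (h := PSeries a x) in *; set (C := PS_mult a a m * rho ^ m) in *.
  nra.
Qed.

Lemma partial_sum_le_inside x N :
  0 <= x < rho -> sum_f_R0 (fun n => a n * x ^ n) N <= PS_mult a a m * rho ^ m + 2.
Proof.
  intro Hx; pose proof (Rabs_lt_CV_radius x Hx) as Hin.
  pose proof (PSeries_correct _ _ (CV_radius_inside _ _ Hin)) as Hh.
  assert (Hterm : forall n, 0 <= a n * x ^ n)
    by (intro; apply Rmult_le_pos; [|apply pow_le]; auto; lra).
  pose proof (sum_incr _ N _ (pseries_partial_sums_cv _ _ _ Hh) Hterm).
  pose proof (PSeries_le_inside x Hx); lra.
Qed.

Lemma partial_sum_le_radius N :
  sum_f_R0 (fun n => a n * rho ^ n) N <= PS_mult a a m * rho ^ m + 2.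
Proof.
  apply (continuity_pt_le_from_left (fun x => sum_f_R0 (fun n => a n * x ^ n) N) rho 0);
    [apply continuity_finite_sum|exact rho_gt0|].
  intros x Hx; exact (partial_sum_le_inside x N Hx).
Qed.

Lemma ex_pseries_radius : ex_pseries a rho.
Proof.
  destruct (growing_cv (fun N => sum_f_R0 (fun n => a n * rho ^ n) N)) as [l Hl].
  - intro N; rewrite tech5.
    assert (0 <= a (S N) * rho ^ S N) by (apply Rmult_le_pos, pow_le; auto; lra); lra.
  - exists (PS_mult a a m * rho ^ m + 2); intros y [N ->]; apply partial_sum_le_radius.
  - apply ex_pseries_R; exists l; apply is_series_Reals, Hl.
Qed.

Lemma PSeries_cvg_at_radius :
  filterlim (PSeries a) (at_left rho) (locally (PSeries a rho)).
Proof.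
  pose proof (Abel a) as HAbel; rewrite radius_a in HAbel.
  apply HAbel; [exact rho_gt0|exact I|exact ex_pseries_radius].
Qed.

End ConvolutionBoundedPowerSeries.

Theorem lemma3p4 (m : nat) (T : tree) (H : nat -> nat) :
  (2 <= m)%nat ->
  is_hierarchy T ->
  leaves T = m ->
  (forall n : nat, num_classes (avoids T) n (H n)) ->
  exists rho : R,
    0 < rho /\
    CV_radius (fun n => INR (H n)) = Finite rho /\
    ex_series (fun n => INR (H n) * rho ^ n) /\
    filterlim (PSeries (fun n => INR (H n))) (at_left rho)
      (locally (Series (fun n => INR (H n) * rho ^ n))).
Proof.
  intros Hm _ <- HN.
  set (a := fun n => INR (H n)).
  assert (Ha : forall n, Rabs (a n) = a n) by (intro; apply Rabs_pos_eq, pos_INR).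
  assert (Hlow : Rbar_le (/ INR 16) (CV_radius a)).
  { apply (CV_radius_ge_inv a (INR 2)); [apply lt_0_INR; lia|]; intro n.
    rewrite Ha, <- pow_INR, <- mult_INR; apply le_INR.
    exact (num_classes_le_pow _ n _ (fun t Ht => proj1 Ht) (HN n)). }
  assert (Hup : Rbar_le (CV_radius a) 1).
  { apply CV_radius_le_1; intro N; exists (N + leaves T + 2)%nat; split; [lia|].
    rewrite Ha; apply (le_INR 1), (num_classes_avoids_pos T (N + leaves T + 2)); auto; lia. }
  destruct (CV_radius a) as [rho| |] eqn:Hradius; try contradiction.
  assert (Hrho : 0 < rho)
    by (assert (0 < / INR 16) by (apply Rinv_0_lt_compat, lt_0_INR; lia); simpl in Hlow; lra).
  destruct (num_classes_reps _ H HN) as [reps Hreps].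
  assert (Hconv : forall n, n <> leaves T -> PS_mult a a n <= 2 * a n).
  { intros n Hn; apply (sum_conv_classes_le T H reps HN); auto; apply Hreps. }
  exists rho; split; [exact Hrho|split; [reflexivity|split]].
  - apply ex_pseries_R, (ex_pseries_radius a (leaves T)); auto; intro; apply pos_INR.
  - apply (PSeries_cvg_at_radius a (leaves T)); auto; intro; apply pos_INR.
Qed.
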